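(* Let $(M,J)$ be an almost complex manifold and $\nabla$ a connection on $M$. Then: (1) in local coordinates $(x_1,\dots,x_n,p_1,\dots,p_n)$ on $T^*M$, with respect to the basis $(\partial_{x},\partial_p)$, $J^{G,\nabla}$ has block matrix with upper-left block $(J^i_j)$, upper-right block $0$, lower-left block with entries $\Gamma_{l,i}J^l_j-\Gamma_{j,l}J^l_i$, and lower-right block $(J^j_i)$ (i.e. the transpose of $J$); (2) $J^{G,\nabla}=J^c+\gamma(S)$, where $S(X,Y)=-(\nabla J)(X,Y)+(\nabla J)(Y,X)+T(JX,Y)-JT(X,Y)$ and $T$ is the torsion of $\nabla$.
   Context: $J=J^k_ldx^l\otimes\partial_{x_k}$ with $J^2=-\mathrm{Id}$; Einstein summation. Christoffel symbols: $\nabla_{\partial_{x_i}}\partial_{x_j}=\Gamma^k_{i,j}\partial_{x_k}$, and $\Gamma_{i,j}:=p_k\Gamma^k_{i,j}$. Torsion $T(X,Y)=\nabla_XY-\nabla_YX-[X,Y]$; $(\nabla J)(X,Y)=\nabla_X(JY)-J\nabla_XY$. The induced connection on $T^*M$ is $(\nabla_Xs)(Y)=X(s(Y))-s(\nabla_XY)$; $H^\nabla_\xi=\{d_xs(X): X\in T_xM,\ s(x)=\xi,\ \nabla_Xs=0\}$, $T_\xi T^*M=H^\nabla_\xi\oplus T^*_xM$, $v^\nabla$ the projection onto $T^*_xM$ along $H^\nabla_\xi$. The generalized horizontal lift is $J^{G,\nabla}(X,v^\nabla(Y))=(JX,{}^tJ(v^\nabla(Y)))$ with $JX:=(d_\xi\pi|_{H^\nabla_\xi})^{-1}(J(x)d_\xi\pi(X))$.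 For $R=R^k_{ij}dx^i\otimes dx^j\otimes\partial_{x_k}$, $\gamma(R):=p_kR^k_{ij}dx^i\otimes\partial_{p_j}$. The complete lift $J^c$ is defined by $d(\theta(J))=\omega_{st}(J^c\cdot,\cdot)$ with $\theta(J)=p_kJ^k_ldx^l$, $\omega_{st}=d(p_idx^i)$; locally its block matrix has upper-left $J^i_j$, upper-right $0$, lower-left $p_k(\partial_{x_j}J^k_i-\partial_{x_i}J^k_j)$, lower-right $J^j_i$. *)

(* Local-chart formalization:
   M is replaced by an open coordinate domain U of R^n (points: 'rV[R]_n),
   T^*U = U x R^n with coordinates (x, p); tangent vectors to T^*M at (x,p)
   are pairs (a, b) of components along (d_x, d_p). *)
From HB Require Import structures.
From mathcomp Require Import all_boot all_order all_algebra.
From mathcomp Require Import all_classical all_reals all_analysis.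
Set Implicit Arguments. Unset Strict Implicit. Unset Printing Implicit Defensive.
Import Order.TTheory GRing.Theory Num.Theory.
Import numFieldNormedType.Exports.
Local Open Scope ring_scope.

Section GenLift.
Variables (R : realType) (n : nat).
Notation vec := 'rV[R]_n.

(* A (1,1)-tensor field J = J^k_l dx^l (x) d_{x_k}:  J x k l = J^k_l(x).
   Christoffel symbols: Gam x k i j = Gamma^k_{i,j}(x). *)

Definition Jv (A : 'M[R]_n) (X : vec) : vec := \row_i \sum_j A i j * X 0 j.

(* Gamma_{i,j} := p_k Gamma^k_{i,j} *)
Definition Gp (Gam : vec -> 'I_n -> 'I_n -> 'I_n -> R) (x p : vec) (i j : 'I_n) : R :=
  \sum_k p 0 k * Gam x k i j.

Definition covvec (Gam : vec -> 'I_n -> 'I_n -> 'I_n -> R)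
  (Y : vec -> vec) (x X : vec) : vec :=
  \row_k (derive Y x X 0 k + \sum_i \sum_j Gam x k i j * X 0 i * Y x 0 j).

(* induced connection on 1-forms (covector fields s, s y 0 j = s_j(y)):
   (nabla_X s)(d_{x_j}) = X(s_j) - s(nabla_X d_{x_j}) *)
Definition covform (Gam : vec -> 'I_n -> 'I_n -> 'I_n -> R)
  (s : vec -> vec) (x X : vec) : vec :=
  \row_j (derive s x X 0 j - \sum_k s x 0 k * \sum_i X 0 i * Gam x k i j).

Definition lieb (X Y : vec -> vec) (x : vec) : vec :=
  derive Y x (X x) - derive X x (Y x).

(* torsion at x, vector fields extended as constant (coordinate) fields;
   T(X,Y) = nabla_X Y - nabla_Y X - [X,Y] *)
Definition torsion Gam (x X Y : vec) : vec :=
  covvec Gam (fun=> Y) x X - covvec Gam (fun=> X) x Y - lieb (fun=> X) (fun=> Y) x.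

Definition nablaJ Gam (J : vec -> 'M[R]_n) (x X Y : vec) : vec :=
  covvec Gam (fun y => Jv (J y) Y) x X - Jv (J x) (covvec Gam (fun=> Y) x X).

Definition Stens Gam J (x X Y : vec) : vec :=
  - nablaJ Gam J x X Y + nablaJ Gam J x Y X
  + torsion Gam x (Jv (J x) X) Y - Jv (J x) (torsion Gam x X Y).

Definition ev (i : 'I_n) : vec := \row_j (i == j)%:R.

(* gamma(S) = p_k S^k_{ij} dx^i (x) d_{p_j}, acting on a tangent vector (a,b) *)
Definition gammaS Gam J (x p : vec) (V : vec * vec) : vec * vec :=
  (0, \row_j \sum_i \sum_k p 0 k * Stens Gam J x (ev i) (ev j) 0 k * V.1 0 i).

(* horizontal subspace H^nabla_(x,p) :
   { d_x s (X) : s(x) = p, (nabla_X s)(x) = 0 },  d_x s(X) = (X, D s(x) X) *)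
Definition horiz Gam (x p : vec) (V : vec * vec) : Prop :=
  exists s : vec -> vec, differentiable s x /\ s x = p /\
    covform Gam s x V.1 = 0 /\ V.2 = derive s x V.1.

(* graph of J^{G,nabla} at (x,p): a tangent vector V decomposes as
   V = h + (0,c) with h horizontal (c = v^nabla(V));
   J^{G,nabla} V = (horizontal lift of J (dpi h)) + (0, tJ c),
   with (tJ c)_j = c_l J^l_j. *)
Definition JG_rel Gam (J : vec -> 'M[R]_n) (x p : vec) (V W : vec * vec) : Prop :=
  exists (h : vec * vec) (c : vec), horiz Gam x p h /\ V = (h.1, h.2 + c) /\
    exists h' : vec * vec, horiz Gam x p h' /\ h'.1 = Jv (J x) h.1 /\
      W = (h'.1, h'.2 + c *m J x).

Definition JG_matrix Gam (J : vec -> 'M[R]_n) (x p : vec) (V : vec * vec) : vec * vec :=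
  (Jv (J x) V.1,
   \row_i (\sum_j (\sum_l (Gp Gam x p l i * J x l j - Gp Gam x p j l * J x l i)) * V.1 0 j
           + \sum_j J x j i * V.2 0 j)).

(* 1-forms on T^*U: alpha y q = (dx-components, dp-components) *)
Definition evform (alpha : vec -> vec -> vec * vec) (y q : vec) (V : vec * vec) : R :=
  \sum_i (alpha y q).1 0 i * V.1 0 i + \sum_i (alpha y q).2 0 i * V.2 0 i.

Definition dirder (f : vec -> vec -> R) (x p : vec) (V : vec * vec) : R :=
  derive (fun t : R => f (x + t *: V.1) (p + t *: V.2)) 0 1.

(* exterior derivative on constant coordinate fields:
   d alpha (V,W) = V(alpha(W)) - W(alpha(V)) - alpha([V,W]), [V,W] = 0 *)
Definition dform alpha (x p : vec) (V W : vec * vec) : R :=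
  dirder (fun y q => evform alpha y q W) x p V - dirder (fun y q => evform alpha y q V) x p W.

Definition thetaJ (J : vec -> 'M[R]_n) (y q : vec) : vec * vec := (q *m J y, 0).
(* Liouville form p_i dx^i ; omega_st = d(p_i dx^i) *)
Definition liouville (y q : vec) : vec * vec := (q, 0).

Definition is_complete_lift (J : vec -> 'M[R]_n) (x p : vec) (Jc : vec * vec -> vec * vec) : Prop :=
  forall V W, dform (thetaJ J) x p V W = dform liouville x p (Jc V) W.

End GenLift.

(* Tangent vectors to T^*U at (x, p) are pairs (X, b) of row vectors, so the
   blocks of the paper appear transposed.  A vector (X, b) is horizontal iff
   b = X G with G_ij = p_k Gamma^k_ij: every nabla-parallel section through p
   has this differential, and the affine section y |-> p + (y - x) G realises
   it.  Splitting V = h + (0, c) accordingly makes J^{G,nabla} an explicit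
   matrix, which is part (1).  For part (2), testing d theta(J) =
   omega_st(J^c ., .) against coordinate vectors computes J^c; in coordinates
   S(X, Y) = (D_Y J) X - (D_X J) Y + w(JX) Y - w(X) J Y, with w the connection
   matrix, and contracting S with p gives exactly the difference between the
   lower-left blocks of J^{G,nabla} and J^c. *)

From HB Require Import structures.
From mathcomp Require Import all_boot all_order all_algebra.
From mathcomp Require Import all_classical all_reals all_analysis.
From mathcomp Require Import ring.
Set Implicit Arguments.
Unset Strict Implicit.
Unset Printing Implicit Defensive.

Import Order.TTheory GRing.Theory Num.Theory.
Import numFieldNormedType.Exports.
Local Open Scope ring_scope.

Section Rows.
Variables (R : realType) (n : nat).
Implicit Types (A : 'M[R]_n) (X : 'rV[R]_n).

Lemma ev_delta (i : 'I_n) : ev R i = delta_mx 0 i.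
Proof. by apply/rowP => j; rewrite !mxE eqxx eq_sym. Qed.

Lemma sum_mul_ev (F : 'I_n -> R) i : \sum_l F l * ev R i 0 l = F i.
Proof.
rewrite (bigD1 i) //= big1 ?addr0; first by rewrite mxE eqxx mulr1.
by move=> l /negbTE li; rewrite mxE eq_sym li mulr0.
Qed.

Lemma sum_ev_mul (F : 'I_n -> R) i : \sum_l ev R i 0 l * F l = F i.
Proof. by rewrite -[RHS](sum_mul_ev F i); apply: eq_bigr => l _; rewrite mulrC. Qed.

Lemma ev_mul i A : ev R i *m A = row i A.
Proof. by rewrite ev_delta rowE. Qed.

Lemma JvE A X : Jv A X = X *m A^T.
Proof. by apply/rowP => i; rewrite !mxE; apply: eq_bigr => j _; rewrite !mxE mulrC. Qed.

Lemma JvB A X Y : Jv A (X - Y) = Jv A X - Jv A Y.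
Proof. by rewrite !JvE mulmxBl. Qed.

Lemma Jv_ev A j : Jv A (ev R j) = (col j A)^T.
Proof. by rewrite JvE ev_mul tr_col. Qed.

End Rows.

Section Calculus.
Context {R : realType} {V W : normedModType R}.

Lemma derive_affine_along (f : V -> W) x v L :
  (forall h : R, f (h *: v + x) = f x + h *: L) ->
  'D_v f x = L /\ derivable f x v.
Proof.
move=> fL; have quotient h : h != 0 -> h^-1 *: (f (h *: v + x) - f x) = L.
  by move=> h0; rewrite fL addrC addKr scalerA mulVf ?scale1r.
split.
  apply: lim_near_cst => //; near=> h; rewrite /= quotient //; near: h.
  exact: nbhs_dnbhs_neq.
apply: (is_cvg_near_cst L); near=> h; rewrite /= quotient //; near: h.
exact: nbhs_dnbhs_neq.
Unshelve. all: by end_near. Qed.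

Lemma derive_line (f : V -> W) x v :
  'D_1 (fun t : R => f (x + t *: v)) 0 = 'D_v f x.
Proof.
rewrite /derive /=; congr lim; apply: eq_fun => A; do 2!f_equal.
by apply: eq_fun => h; rewrite scale0r !addr0 [h%:A]mulr1 [x + _]addrC.
Qed.

Lemma derivable_line (f : V -> W) x v :
  derivable f x v -> derivable (fun t : R => f (x + t *: v)) 0 1.
Proof. by move/derivable1P; under eq_fun do rewrite addrC. Qed.

Lemma derive_row_expand n (f : 'rV[R]_n -> W) x v : differentiable f x ->
  'D_v f x = \sum_i v 0 i *: 'D_(ev R i) f x.
Proof.
move=> df; rewrite deriveE // {1}(row_sum_delta v) linear_sum.
by apply: eq_bigr => i _; rewrite linearZ /= ev_delta deriveE.
Qed.

Lemma derive_mx_entrywise m k (M : V -> 'M[R]_(m, k)) x v :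
  (forall i j, differentiable (fun y => M y i j) x) ->
  'D_v M x = \matrix_(i, j) 'D_v (fun y => M y i j) x.
Proof.
by move=> dM; apply: derive_mx; apply/derivable_mxP => i j; exact: diff_derivable.
Qed.

Lemma derive_Jv n (A : V -> 'M[R]_n) x v (Y : 'rV[R]_n) :
  (forall k l, differentiable (fun y => A y k l) x) ->
  'D_v (fun y => Jv (A y) Y) x = Jv ('D_v A x) Y.
Proof.
move=> dA.
have entry k : (fun y => Jv (A y) Y 0 k) = \sum_l (Y 0 l \o* fun y => A y k l).
  by apply: funext => y; rewrite mxE fct_sumE.
have dAkl k l : derivable (Y 0 l \o* fun y => A y k l) x v.
  by apply: derivableM; [exact: diff_derivable | exact: derivable_cst].
rewrite derive_mx; last first.
  by apply/derivable_mxP => i k; rewrite ord1 entry; exact: derivable_sum.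
apply/rowP => k; rewrite !mxE entry derive_sum //; apply: eq_bigr => l _.
rewrite deriveMr; last exact: diff_derivable.
by rewrite derive_mx_entrywise // mxE mulrC.
Qed.

End Calculus.

Section RealCalculus.
Variable R : realType.

Lemma derive_mx_row_expand n m k (M : 'rV[R]_n -> 'M[R]_(m, k)) x v :
  (forall i j, differentiable (fun y => M y i j) x) ->
  'D_v M x = \sum_l v 0 l *: 'D_(ev R l) M x.
Proof.
move=> dM; apply/matrixP => i j; rewrite summxE !derive_mx_entrywise // mxE.
rewrite derive_row_expand //; apply: eq_bigr => l _.
by rewrite !mxE derive_mx_entrywise // mxE.
Qed.

Lemma derive_affine_mul (a b : R) (g : R -> R) : derivable g 0 1 ->
  'D_1 (fun t : R => (a + t * b) * g t) 0 = b * g 0 + a * 'D_1 g 0 /\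
  derivable (fun t : R => (a + t * b) * g t) 0 1.
Proof.
move=> dg.
have [Dl dl] : 'D_1 (fun t : R => a + t * b) 0 = b /\
               derivable (fun t : R => a + t * b) 0 1.
  by apply: derive_affine_along => h; rewrite mul0r !addr0 [h%:A]mulr1.
split; last exact: (derivableM dl dg).
by rewrite (deriveM dl dg) Dl mul0r addr0 /GRing.scale /=; ring.
Qed.

End RealCalculus.

Section CompleteLift.
Variables (R : realType) (n : nat).
Implicit Types (x p : 'rV[R]_n) (V W : 'rV[R]_n * 'rV[R]_n).

Definition Jc_corner (J : 'rV[R]_n -> 'M[R]_n) x p : 'M[R]_n :=
  \matrix_(i, j) ((p *m 'D_(ev R i) J x) 0 j - (p *m 'D_(ev R j) J x) 0 i).

Lemma dirder_thetaJ (A : 'rV[R]_n -> 'M[R]_n) x p V W :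
  (forall k l, differentiable (fun y => A y k l) x) ->
  dirder (fun y q => evform (thetaJ A) y q W) x p V =
  \sum_i (V.2 *m A x + p *m 'D_V.1 A x) 0 i * W.1 0 i.
Proof.
move=> dA; rewrite /dirder /evform /thetaJ /=.
pose F i k (t : R) := (p 0 k + t * V.2 0 k) * A (x + t *: V.1) k i * W.1 0 i.
have -> : (fun t : R => \sum_i ((p + t *: V.2) *m A (x + t *: V.1)) 0 i * W.1 0 i
    + \sum_i (0 : 'rV[R]_n) 0 i * W.2 0 i) = \sum_i \sum_k F i k.
  apply: funext => t; rewrite [X in _ + X]big1 ?addr0 => [|i _]; last first.
    by rewrite mxE mul0r.
  rewrite fct_sumE; apply: eq_bigr => i _; rewrite fct_sumE mxE mulr_suml.
  by apply: eq_bigr => k _; rewrite /F !mxE.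
have DF i k : 'D_1 (F i k) 0 =
    (V.2 0 k * A x k i + p 0 k * 'D_V.1 (fun y => A y k i) x) * W.1 0 i /\
    derivable (F i k) 0 1.
  have dg : derivable (fun t : R => A (x + t *: V.1) k i) 0 1.
    exact: derivable_line (diff_derivable (dA k i)).
  have [D d] := derive_affine_mul (p 0 k) (V.2 0 k) dg.
  split; last exact: (derivableM d (derivable_cst _ _ _)).
  by rewrite deriveMr // D (derive_line (fun y => A y k i)) scale0r addr0 mulrC.
rewrite derive_sum => [|i]; last by apply: derivable_sum => k; exact: (DF i k).2.
apply: eq_bigr => i _; rewrite derive_sum => [|k]; last exact: (DF i k).2.
under eq_bigr => k _ do rewrite (DF i k).1.
rewrite -mulr_suml !mxE -big_split; congr (_ * _); apply: eq_bigr => k _.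
by rewrite derive_mx_entrywise // mxE.
Qed.

Lemma dirder_liouville x p V W :
  dirder (fun y q => evform (@liouville R n) y q W) x p V = \sum_i V.2 0 i * W.1 0 i.
Proof.
have -> : (fun y q => evform (@liouville R n) y q W) =
    (fun y q => evform (thetaJ (fun=> 1%:M)) y q W).
  by apply: funext => y; apply: funext => q; rewrite /evform /thetaJ /= mulmx1.
rewrite dirder_thetaJ => [|k l]; last exact: differentiable_cst.
by under eq_bigr do rewrite derive_cst mulmx0 addr0 mulmx1.
Qed.

Lemma complete_liftE (J : 'rV[R]_n -> 'M[R]_n) x p Jc V :
  (forall k l, differentiable (fun y => J y k l) x) ->
  is_complete_lift J x p Jc ->
  Jc V = (Jv (J x) V.1, V.1 *m Jc_corner J x p + V.2 *m J x).
Proof.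
move=> dJ HJc.
have pair0 (u : 'rV[R]_n) : \sum_i u 0 i * (0 : 'rV[R]_n) 0 i = 0.
  by apply: big1 => i _; rewrite [X in _ * X]mxE mulr0.
have pair0l (u : 'rV[R]_n) : \sum_i (0 : 'rV[R]_n) 0 i * u 0 i = 0.
  by apply: big1 => i _; rewrite [X in X * _]mxE mul0r.
case E: (Jc V) => [U1 U2]; congr pair; apply/rowP => j.
- have := HJc V (0, ev R j).
  rewrite /dform !dirder_thetaJ // !dirder_liouville E /= derive0 mulmx0 addr0.
  rewrite !pair0 ev_mul !sub0r sum_ev_mul => /oppr_inj <-.
  by rewrite !mxE; apply: eq_bigr => i _; rewrite mxE.
- have := HJc V (ev R j, 0).
  rewrite /dform !dirder_thetaJ // !dirder_liouville E /= !sum_mul_ev.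
  rewrite mul0mx add0r pair0l subr0 => <-.
  have DV : p *m 'D_V.1 J x = \sum_i V.1 0 i *: (p *m 'D_(ev R i) J x).
    by rewrite derive_mx_row_expand // mulmx_sumr; under eq_bigr do rewrite -scalemxAr.
  rewrite DV mxE [in RHS]mxE summxE [(V.2 *m J x) 0 j + _]addrC addrAC.
  congr (_ + _); rewrite [in RHS]mxE -sumrB; apply: eq_bigr => i _.
  by rewrite [in RHS]mxE mulrBr [X in X - _]mxE [_ * V.1 0 i]mulrC.
Qed.

End CompleteLift.

Section Lifts.
Variables (R : realType) (n : nat) (Gam : 'rV[R]_n -> 'I_n -> 'I_n -> 'I_n -> R).
Implicit Types (x p X Y : 'rV[R]_n) (A : 'M[R]_n).

Definition conn_mx x X : 'M[R]_n := \matrix_(k, j) \sum_i X 0 i * Gam x k i j.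

Definition Gp_mx x p : 'M[R]_n := \matrix_(i, j) Gp Gam x p i j.

Lemma mul_conn_mx x p X : p *m conn_mx x X = X *m Gp_mx x p.
Proof.
apply/rowP => j; rewrite !mxE.
under eq_bigr do rewrite mxE big_distrr.
rewrite exchange_big; apply: eq_bigr => i _; rewrite !mxE big_distrr.
by apply: eq_bigr => k _ /=; rewrite mulrCA.
Qed.

Lemma covformE (s : 'rV[R]_n -> 'rV[R]_n) x X :
  covform Gam s x X = 'D_X s x - s x *m conn_mx x X.
Proof. by apply/rowP => j; rewrite !mxE; under [in RHS]eq_bigr do rewrite mxE. Qed.

Lemma horizP x p V : horiz Gam x p V <-> V.2 = V.1 *m Gp_mx x p.
Proof.
split.
  case=> s [_ [sx [+ ->]]]; rewrite covformE sx mul_conn_mx.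
  by move/eqP; rewrite subr_eq0 => /eqP.
move=> HV; set G := Gp_mx x p.
pose s (y : 'rV[R]_n) : 'rV[R]_n := p + \sum_i (y 0 i - x 0 i) *: row i G.
have sx : s x = p by rewrite /s big1 ?addr0 // => i _; rewrite subrr scale0r.
have [Ds _] : 'D_V.1 s x = V.1 *m G /\ derivable s x V.1.
  apply: derive_affine_along => h; rewrite sx /s mulmx_sum_row scaler_sumr.
  by congr (_ + _); apply: eq_bigr => i _; rewrite !mxE addrK scalerA.
exists s; split.
  apply: differentiableD; first exact: differentiable_cst.
  rewrite -fct_sumE; apply: differentiable_sum => i; apply: differentiableZl.
  by apply: differentiableB; [exact: differentiable_coord | exact: differentiable_cst].
by rewrite covformE Ds sx mul_conn_mx subrr.
Qed.

Lemma JG_matrixE (J : 'rV[R]_n -> 'M[R]_n) x p V :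
  JG_matrix Gam J x p V = (Jv (J x) V.1,
    V.1 *m ((J x)^T *m Gp_mx x p - Gp_mx x p *m J x) + V.2 *m J x).
Proof.
congr pair; apply/rowP => i; rewrite !mxE; congr (_ + _); apply: eq_bigr => j _.
  rewrite !mxE -sumrB mulrC; congr (_ * _); apply: eq_bigr => l _.
  by rewrite !mxE [J x l j * _]mulrC.
exact: mulrC.
Qed.

Lemma JG_relP (J : 'rV[R]_n -> 'M[R]_n) x p V W :
  JG_rel Gam J x p V W <-> W = JG_matrix Gam J x p V.
Proof.
rewrite JG_matrixE; set G := Gp_mx x p; split.
  case=> h [c [/horizP h2 [-> [h' [/horizP h'2 [h'1 ->]]]]]] /=.
  rewrite h'2 h'1 h2 JvE mulmxBr mulmxDl !mulmxA.
  by rewrite addrA subrK.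
move=> ->; exists (V.1, V.1 *m G), (V.2 - V.1 *m G).
split; first exact/horizP.
split; first by case: V => V1 V2 /=; rewrite addrC subrK.
exists (Jv (J x) V.1, Jv (J x) V.1 *m G); split; first exact/horizP.
split => //=; congr pair.
by rewrite JvE mulmxBr !mulmxA mulmxBl addrCA addrC.
Qed.

Lemma covvecE (Y : 'rV[R]_n -> 'rV[R]_n) x X :
  covvec Gam Y x X = 'D_X Y x + Jv (conn_mx x X) (Y x).
Proof.
apply/rowP => k; rewrite !mxE exchange_big; congr (_ + _); apply: eq_bigr => j _.
by rewrite !mxE mulr_suml; apply: eq_bigr => i _; rewrite [Gam _ _ _ _ * _]mulrC.
Qed.

Lemma torsion_cst x X Y : torsion Gam x X Y = Jv (conn_mx x X) Y - Jv (conn_mx x Y) X.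
Proof. by rewrite /torsion /lieb !covvecE !derive_cst !add0r oppr0 subr0. Qed.

Section AlmostComplex.
Variables (J : 'rV[R]_n -> 'M[R]_n) (x : 'rV[R]_n).
Hypothesis dJ : forall k l, differentiable (fun y => J y k l) x.

Lemma nablaJE X Y : nablaJ Gam J x X Y =
  Jv ('D_X J x) Y + Jv (conn_mx x X) (Jv (J x) Y) - Jv (J x) (Jv (conn_mx x X) Y).
Proof. by rewrite /nablaJ !covvecE derive_Jv // derive_cst add0r. Qed.

Lemma StensE X Y : Stens Gam J x X Y =
  Jv ('D_Y J x) X - Jv ('D_X J x) Y
  + Jv (conn_mx x (Jv (J x) X)) Y - Jv (conn_mx x X) (Jv (J x) Y).
Proof.
rewrite /Stens !nablaJE !torsion_cst JvB.
(* an identity between seven vectors of an abelian group *)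
do 7!move: (Jv _ _) => ?.
by apply/rowP => k; rewrite !mxE; ring.
Qed.

Lemma pair_Stens_ev p i j :
  \sum_k p 0 k * Stens Gam J x (ev R i) (ev R j) 0 k =
  ((J x)^T *m Gp_mx x p - Gp_mx x p *m J x - Jc_corner J x p) i j.
Proof.
pose pair (u : 'rV[R]_n) := \sum_k p 0 k * u 0 k.
have pairD u v : pair (u + v) = pair u + pair v.
  by rewrite /pair -big_split; apply: eq_bigr => k _; rewrite mxE mulrDr.
have pairN u : pair (- u) = - pair u.
  by rewrite /pair -sumrN; apply: eq_bigr => k _; rewrite mxE mulrN.
have pair_Jv B u : pair (Jv B u) = \sum_l (p *m B) 0 l * u 0 l.
  rewrite /pair; under eq_bigr do rewrite mxE big_distrr.
  rewrite exchange_big; apply: eq_bigr => l _ /=; rewrite mxE mulr_suml.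
  by apply: eq_bigr => k _; rewrite mulrA.
rewrite -/(pair _) StensE // !pairD !pairN !pair_Jv !sum_mul_ev !mul_conn_mx.
set G := Gp_mx x p.
have JG : (Jv (J x) (ev R i) *m G) 0 j = ((J x)^T *m G) i j.
  by rewrite Jv_ev tr_col -row_mul mxE.
have GJ : \sum_l (ev R i *m G) 0 l * Jv (J x) (ev R j) 0 l = (G *m J x) i j.
  by rewrite [RHS]mxE ev_mul Jv_ev; apply: eq_bigr => l _; rewrite !mxE.
have mxBE (M N : 'M[R]_n) : (M - N) i j = M i j - N i j by rewrite !mxE.
by rewrite 2!mxBE JG GJ [Jc_corner J x p i j]mxE; ring.
Qed.

Lemma gammaSE p V : gammaS Gam J x p V =
  (0, V.1 *m ((J x)^T *m Gp_mx x p - Gp_mx x p *m J x - Jc_corner J x p)).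
Proof.
congr pair; apply/rowP => j; rewrite mxE [RHS]mxE; apply: eq_bigr => i _.
by rewrite -mulr_suml pair_Stens_ev mulrC.
Qed.

Lemma complete_lift_add_gammaS p Jc V : is_complete_lift J x p Jc ->
  Jc V + gammaS Gam J x p V = JG_matrix Gam J x p V.
Proof.
move=> HJc; rewrite (complete_liftE V dJ HJc) gammaSE JG_matrixE.
congr pair; first by rewrite addr0.
by rewrite mulmxBr addrC addrA subrK.
Qed.

End AlmostComplex.

End Lifts.

Theorem proposition2p6 (R : realType) (n : nat) (U : set 'rV[R]_n)
  (J : 'rV[R]_n -> 'M[R]_n) (Gam : 'rV[R]_n -> 'I_n -> 'I_n -> 'I_n -> R) :
  open U ->
  (forall x, U x -> J x *m J x = - 1%:M) ->
  (forall x, U x -> forall k l : 'I_n, differentiable (fun y => J y k l) x) ->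
  (forall x p : 'rV[R]_n, U x -> forall V W : 'rV[R]_n * 'rV[R]_n,
      JG_rel Gam J x p V W <-> W = JG_matrix Gam J x p V)
  /\
  (forall x p : 'rV[R]_n, U x ->
    forall Jc : 'rV[R]_n * 'rV[R]_n -> 'rV[R]_n * 'rV[R]_n,
      is_complete_lift J x p Jc ->
      forall V W : 'rV[R]_n * 'rV[R]_n,
        JG_rel Gam J x p V W <-> W = Jc V + gammaS Gam J x p V).
Proof.
move=> _ _ dJ; split=> x p Ux; first exact: JG_relP.
move=> Jc HJc V W; rewrite (complete_lift_add_gammaS Gam (dJ x Ux) V HJc).
exact: JG_relP.
Qed.
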